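(* Let $F$ be a $4$-regular graph, let $D$ be a directed version of $F$, let $B$ be a strictly fundamental cycle basis of $F$, and let $\mathbf o$ be a transitional orientation of $F$. Then $\mathrm{CM}(F,B,D)\cdot\Delta_{D,\mathbf o}$ is totally transversally unimodular.
   Context: Graphs: $G=(V,H,E,\epsilon)$ with finite sets of vertices $V$ and half-edges $H$, a partition $E$ of $H$ into unordered pairs (edges), and $\epsilon:H\to V$; loops and multiple edges allowed. A directed version orders each edge as (tail, head). A single transition is an unordered pair of distinct half-edges incident with a common vertex; a directed single transition is such an ordered pair. A closed walk is a sequence $((h_1,h_2),\dots,(h_{n-1},h_n))$ of directed single transitions with $\{h_2,h_3\},\{h_4,h_5\},\dots,\{h_n,h_1\}$ edges, up to cyclic shift. $\sigma(D,W)\in\mathbb Z^{E}$ counts, at each edge, traversals by $W$ along its direction in $D$ minus traversals against it. An oriented circuit is a nonempty closed walk in which each half-edge occurs at most once; a circuit is one with orientation forgotten. For a maximal forest $T$ of $G$ and $e\notin T$, the fundamental circuit of $e$ is the unique circuit whose only edge outside $T$ is $e$; a strictly fundamental cycle basis w.r.t. $T$ is the set of these fundamental circuits, each with an arbitrary orientation. $\mathrm{CM}(G,\Gamma,D)$ is the $\Gamma\times E(G)$ matrix whose row indexed by $W\in\Gamma$ is $\sigma(D,W)$. $F$ is $4$-regular if every vertex is incident with exactly $4$ half-edges. A transition at $v$ is a partition of the four half-edges at $v$ into two single transitions; $\mathfrak T(F)$ is the set of all transitions, and a transversal of $\mathfrak T(F)$ is a set containing exactly one transition at each vertex. A transitional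 orientation $\mathbf o$ assigns to each transition $t$ one of its two single transitions $\mathbf o(t)$. $\Delta_{D,\mathbf o}$ is the $E(F)\times\mathfrak T(F)$ matrix over $\mathbb Q$ whose $(e,t)$ entry is $1$ if $e\cap\mathbf o(t)=\{h\}$ with $h$ the tail of $e$ in $D$, $-1$ if $e\cap\mathbf o(t)=\{h\}$ with $h$ the head, and $0$ otherwise. An $X\times\mathfrak T(F)$ matrix is totally transversally unimodular if for every transversal $T$ of $\mathfrak T(F)$, its submatrix of columns in $T$ is totally unimodular (every square submatrix has determinant in $\{-1,0,1\}$). *)

From mathcomp Require Import all_boot all_order all_algebra.
Set Implicit Arguments. Unset Strict Implicit. Unset Printing Implicit Defensive.
Import GRing.Theory Num.Theory.

Local Open Scope ring_scope.

(* A graph G = (V, H, E, eps): finite types of vertices V and half-edges H,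
   E : {set {set H}} a partition of H into unordered pairs (edges),
   eps : H -> V the incidence map. *)
Section Graphs.
Variables (V H : finType) (E : {set {set H}}) (eps : H -> V).

Definition is_graph : bool :=
  partition E [set: H] && [forall e in E, #|e| == 2].

Definition four_regular : Prop :=
  forall v : V, #|[set h | eps h == v]| = 4%N.

(* A directed version D is given by its set of tail half-edges [tl]:
   each edge contains exactly one tail; the other half-edge is the head. *)
Definition directed_version (tl : {set H}) : Prop :=
  forall e, e \in E -> #|e :&: tl| = 1%N.

Definition dsingle_transition (p : H * H) : bool :=
  (p.1 != p.2) && (eps p.1 == eps p.2).

Definition closed_walk (W : seq (H * H)) : bool :=
  all dsingle_transition W && cycle (fun p q => [set p.2; q.1] \in E) W.

(* sigma(D,W)(e): traversals of e along D minus traversals against D.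
   The traversal following transition p leaves through the half-edge p.2
   of the edge {p.2, q.1}; it is along D iff p.2 is the tail. *)
Definition sigma (tl : {set H}) (W : seq (H * H)) (e : {set H}) : int :=
  \sum_(p <- W) (if p.2 \in e then (if p.2 \in tl then 1 else -1) else 0).

Definition oriented_circuit (W : seq (H * H)) : bool :=
  (W != [::]) && closed_walk W && uniq (flatten [seq [:: p.1; p.2] | p <- W]).

Definition uses (W : seq (H * H)) (e : {set H}) : bool :=
  has (fun p => p.2 \in e) W.

Definition forest (T : {set {set H}}) : Prop :=
  T \subset E /\
  forall W, oriented_circuit W -> exists2 e, e \in E & uses W e && (e \notin T).

Definition maximal_forest (T : {set {set H}}) : Prop :=
  forest T /\ forall T', forest T' -> T \subset T' -> T' = T.

(* B e is the fundamental circuit of the edge e \notin T (with an arbitrary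
   orientation and starting point): an oriented circuit traversing e whose
   only edge outside T is e. *)
Definition strictly_fundamental_basis (T : {set {set H}})
    (B : {set H} -> seq (H * H)) : Prop :=
  forall e, e \in E :\: T ->
    [/\ oriented_circuit (B e), uses (B e) e &
        forall e', e' \in E -> uses (B e) e' -> (e' \in T) || (e' == e)].

(* CM(F,B,D): row indexed by (the fundamental circuit B e0 of) e0,
   column indexed by the edge e. *)
Definition CM (tl : {set H}) (B : {set H} -> seq (H * H)) (e0 e : {set H}) : int :=
  sigma tl (B e0) e.

Definition transition_at (v : V) (t : {set {set H}}) : bool :=
  partition t [set h | eps h == v] && [forall s in t, #|s| == 2].

Definition transitions : {set {set {set H}}} :=
  [set t | [exists v, transition_at v t]].

Definition transitional_orientation (o : {set {set H}} -> {set H}) : Prop :=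
  forall t, t \in transitions -> o t \in t.

Definition Delta (tl : {set H}) (o : {set {set H}} -> {set H})
    (e : {set H}) (t : {set {set H}}) : rat :=
  match [pick h | e :&: o t == [set h]] with
  | Some h => if h \in tl then 1 else -1
  | None => 0
  end.

Definition transversal (Tr : {set {set {set H}}}) : Prop :=
  Tr \subset transitions /\
  forall v : V, #|[set t in Tr | transition_at v t]| = 1%N.

Definition totally_unimodular (X Y : finType) (R : {set X}) (C : {set Y})
    (M : X -> Y -> rat) : Prop :=
  forall (k : nat) (f : 'I_k -> X) (g : 'I_k -> Y),
    injective f -> injective g ->
    (forall i, f i \in R) -> (forall j, g j \in C) ->
    \det (\matrix_(i, j) M (f i) (g j)) \in [:: 0; 1; -1].

Definition totally_transversally_unimodular (X : finType) (R : {set X})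
    (M : X -> {set {set H}} -> rat) : Prop :=
  forall Tr, transversal Tr -> totally_unimodular R Tr M.

Definition CM_Delta (tl : {set H}) (B : {set H} -> seq (H * H))
    (o : {set {set H}} -> {set H}) (e0 : {set H}) (t : {set {set H}}) : rat :=
  \sum_(e in E) ((CM tl B e0 e)%:~R * Delta tl o e t).

End Graphs.

From Pilot Require Import Defs.
From mathcomp Require Import all_boot all_order all_algebra.
Set Implicit Arguments. Unset Strict Implicit. Unset Printing Implicit Defensive.
Import Order.TTheory GRing.Theory Num.Theory.
Local Open Scope ring_scope.

(* Split every vertex [v] whose transition [t_v] indexes a column of the
   submatrix into a vertex incident with the two half-edges of the single
   transition [o t_v] and one incident with the other half-edges, and add a new
   arc [a_v] between the two halves.  A fundamental circuit [C] of [F] then lifts to a circulation of the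
   split graph that agrees with [CM] on the old edges and whose value on [a_v]
   is the net number of times [C] leaves through [o t_v], which is the entry
   [(CM Delta)(C, t_v)].  The tree edges and the new arcs carry no nonzero
   circulation (following positive flow would close a circuit in the forest),
   so they form a basis of the column space of the incidence matrix of the
   split graph, and the square submatrices of [CM Delta] are blocks of the
   coordinates of the non-tree edges in this basis.  Such a block is, up to an
   invertible maximal minor, itself a maximal minor of the incidence matrix, and
   incidence matrices of directed graphs are totally unimodular. *)

Lemma sum_delta (R : nzSemiRingType) (I : finType) (P : pred I) (a : I) :
  \sum_(i | P i) ((a == i)%:R : R) = (P a)%:R.
Proof.
rewrite big_mkcond (bigD1 a) //= eqxx big1 => [|i]; first by case: (P a); rewrite addr0.
by rewrite eq_sym => /negbTE->; case: (P i).
Qed.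

Lemma sumr_count (R : nzSemiRingType) (T : Type) (P : pred T) (s : seq T) :
  \sum_(x <- s) ((P x)%:R : R) = (count P s)%:R.
Proof. by elim: s => [|x s IHs]; rewrite ?big_nil ?big_cons //= IHs natrD. Qed.

Lemma big_cycle (R : nmodType) (T : Type) (r : rel T) (a b : T -> R) s :
  cycle r s -> (forall p q, r p q -> a q = b p) ->
  \sum_(q <- s) a q = \sum_(q <- s) b q.
Proof.
case: s => [|x s] cyc_s rab; first by rewrite !big_nil.
have shift y t : path r y (rcons t x) ->
    \sum_(q <- rcons t x) a q = \sum_(q <- y :: t) b q.
  elim: t y => [|y' t IHt] y /=; first by rewrite andbT !big_seq1 => /rab.
  by case/andP=> /rab ab_y /IHt; rewrite !big_cons ab_y => ->.
by rewrite -(shift x s cyc_s) big_rcons big_cons addrC.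
Qed.

Lemma exists_fcycle_orbit (T : finType) (f : T -> T) (P : pred T) x :
  {homo f : y / P y} -> P x ->
  exists y, fcycle f (orbit f y) /\ {subset orbit f y <= P}.
Proof.
move=> fP Px; have /trajectP[i lt_i_o iterE] := looping_order f x.
have Piter n y : P y -> P (iter n f y) by move=> Py; elim: n => //= n /fP.
exists (iter i f x); split; last by move=> _ /trajectP[n _ ->]; apply/Piter/Piter.
apply/(orbitPcycle 3 0); exists (order f x - i).-1.
by rewrite prednK ?subn_gt0 // -iterD subnK ?(ltnW lt_i_o).
Qed.

Lemma uniq_flatten_pairs (X : Type) (T : eqType) (a b : X -> T) (s : seq X) :
  uniq (flatten [seq [:: a x; b x] | x <- s]) = uniq (map a s ++ map b s).
Proof.
apply: perm_uniq; elim: s => //= x s IHs.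
rewrite perm_cons; apply: perm_trans (_ : perm_eq _ (b x :: (map a s ++ map b s))) _.
  by rewrite perm_cons.
exact/permEl/(perm_catCA [:: b x]).
Qed.

(** * Incidence matrices *)

Section IncidenceMatrices.
Context {F : fieldType}.

Definition sign_or_zero (x : F) : bool := x \in [:: 0; 1; -1].

Lemma sign_or_zeroM x y :
  sign_or_zero x -> sign_or_zero y -> sign_or_zero (x * y).
Proof.
rewrite /sign_or_zero !inE => /or3P[] /eqP-> /or3P[] /eqP->;
by rewrite ?mulrNN ?mul0r ?mulr0 ?mul1r ?mulr1 !eqxx /= ?orbT.
Qed.

Lemma sign_or_zero_sign (b : bool) : sign_or_zero ((-1) ^+ b).
Proof. by case: b; rewrite /sign_or_zero !inE eqxx ?orbT. Qed.

Lemma sign_or_zero_sqr x : sign_or_zero x -> x != 0 -> x * x = 1.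
Proof. by rewrite /sign_or_zero !inE => /or3P[] /eqP->; rewrite ?eqxx ?mulrNN ?mulr1. Qed.

(* The column of an arc [x -> y]; [None] stands for an endpoint outside the
   index set, which makes the notion stable under the deletion of rows. *)
Definition incidence_col (I : eqType) (c : I -> F) : Prop :=
  exists x y : option I, forall i, c i = (x == Some i)%:R - (y == Some i)%:R.

Definition incidence_mx m n (A : 'M[F]_(m, n)) : Prop :=
  forall j, incidence_col (A^~ j).

Lemma eq_incidence_col (I : eqType) (c c' : I -> F) :
  c =1 c' -> incidence_col c -> incidence_col c'.
Proof. by move=> eq_c [x [y cE]]; exists x, y => i; rewrite -eq_c. Qed.

Lemma incidence_col_delta (I : eqType) (x y : I) :
  incidence_col (fun i => (x == i)%:R - (y == i)%:R).
Proof. by exists (Some x), (Some y). Qed.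

Lemma incidence_colN (I : eqType) (c : I -> F) :
  incidence_col c -> incidence_col (fun i => - c i).
Proof. by case=> x [y cE]; exists y, x => i; rewrite cE opprB. Qed.

Lemma incidence_col_comp (I : finType) (J : eqType) (r : I -> J) (c : J -> F) :
  injective r -> incidence_col c -> incidence_col (c \o r).
Proof.
move=> r_inj [x [y cE]].
pose pre (a : option J) := if a is Some b then [pick i | r i == b] else None.
have preE a i : (pre a == Some i) = (a == Some (r i)).
  case: a => [b|] //=; case: pickP => [i0 /eqP <-|none] /=.
    by rewrite !(inj_eq Some_inj) (inj_eq r_inj).
  by rewrite (inj_eq Some_inj) [b == _]eq_sym (none i).
by exists (pre x), (pre y) => i; rewrite /= cE !preE.
Qed.

Lemma incidence_col_enum_val (T : finType) {A : {pred T}} (c : T -> F) :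
  incidence_col c -> incidence_col (fun i : 'I_#|A| => c (enum_val i)).
Proof. exact: incidence_col_comp enum_val_inj. Qed.

Lemma incidence_mx_rowsub m n p (r : 'I_p -> 'I_m) (A : 'M[F]_(m, n)) :
  injective r -> incidence_mx A -> incidence_mx (rowsub r A).
Proof.
move=> r_inj A_inc j; apply: eq_incidence_col (incidence_col_comp r_inj (A_inc j)).
by move=> i; rewrite mxE.
Qed.

Lemma incidence_mx_row_mx m n1 n2 (A : 'M[F]_(m, n1)) (B : 'M_(m, n2)) :
  incidence_mx A -> incidence_mx B -> incidence_mx (row_mx A B).
Proof.
move=> A_inc B_inc j; rewrite -[j]splitK; case: (split j) => j' /=.
  by apply: eq_incidence_col (A_inc j') => i; rewrite row_mxEl.
by apply: eq_incidence_col (B_inc j') => i; rewrite row_mxEr.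
Qed.

Lemma incidence_col_sum_neq0 (I : finType) (c : I -> F) :
  incidence_col c -> \sum_i c i != 0 ->
  exists a (b : bool), forall i, c i = (-1) ^+ b * (a == i)%:R.
Proof.
case=> [[a|] [[b|] cE]]; rewrite (eq_bigr _ (fun i _ => cE i)) sumrB /=;
  rewrite ?sum_delta ?big1 ?subrr ?eqxx // => _.
- by exists a, false => i; rewrite cE mul1r subr0.
- by exists b, true => i; rewrite cE mulN1r sub0r.
Qed.

Lemma det_incidence n (A : 'M[F]_n) : incidence_mx A -> sign_or_zero (\det A).
Proof.
(* A column with a nonzero sum has a single nonzero entry: expand along it.
   Otherwise the rows add up to zero. *)
elim: n A => [|n IHn] A A_inc; first by rewrite det_mx00 (sign_or_zero_sign false).
have [j sum_j | col_sums0] := pickP (fun j => \sum_i A i j != 0).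
  have [a [s Acol]] := incidence_col_sum_neq0 (A_inc j) sum_j.
  rewrite (expand_det_col _ j) (bigD1 a) //= big1 => [|i]; last first.
    by rewrite Acol eq_sym => /negbTE->; rewrite mulr0 mul0r.
  rewrite Acol eqxx mulr1 addr0; apply: sign_or_zeroM; first exact: sign_or_zero_sign.
  apply: sign_or_zeroM; first by rewrite -signr_odd sign_or_zero_sign.
  apply: IHn => j'.
  apply: eq_incidence_col (incidence_col_comp (@lift_inj _ a) (A_inc (lift j j'))).
  by move=> i; rewrite !mxE.
suff /det0P/eqP-> : exists2 v : 'rV[F]_n.+1, v != 0 & v *m A = 0.
  by rewrite /sign_or_zero !inE eqxx.
exists (const_mx 1).
  by apply/eqP => /matrixP/(_ 0 0); rewrite !mxE; apply/eqP; rewrite oner_eq0.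
apply/matrixP => ? j; rewrite !mxE -[RHS](eqP (negbFE (col_sums0 j))).
by apply: eq_bigr => i _; rewrite mxE mul1r.
Qed.

Lemma row_full_ker0 m n (A : 'M[F]_(m, n)) :
  (forall z : 'cV_n, A *m z = 0 -> z = 0) -> row_full A.
Proof.
move=> A_ker; rewrite /row_full -mxrank_tr; apply: inj_row_free => v vA0.
apply: trmx_inj; rewrite trmx0; apply: A_ker.
by rewrite -[A]trmxK -trmx_mul vA0 trmx0.
Qed.

(* On rows where [row_mx A1 A2] is invertible, [row_mx An A2] is that matrix
   times [block_mx X1 0 X2 1]; both are incidence matrices. *)
Lemma det_incidence_coordinates p k m (A1 : 'M[F]_(p, k)) (A2 : 'M_(p, m))
    (An : 'M_(p, k)) (X1 : 'M_k) (X2 : 'M_(m, k)) :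
  incidence_mx A1 -> incidence_mx A2 -> incidence_mx An ->
  row_full (row_mx A1 A2) -> A1 *m X1 + A2 *m X2 = An ->
  sign_or_zero (\det X1).
Proof.
move=> A1_inc A2_inc An_inc A_full AX.
pose r := fullrankfun A_full.
have r_inj : injective r := @fullrankfun_inj _ _ _ _ A_full.
set A0 := rowsub r (row_mx A1 A2).
have A0_sign : sign_or_zero (\det A0).
  exact/det_incidence/incidence_mx_rowsub/incidence_mx_row_mx.
have A0_sqr : \det A0 * \det A0 = 1.
  by apply: sign_or_zero_sqr; rewrite // -unitfE -unitmxE fullrowsub_unit.
have A0X : A0 *m block_mx X1 0 X2 1%:M = rowsub r (row_mx An A2).
  by rewrite mul_rowsub_mx block_mxEh mul_mx_row !mul_row_col AX mulmx0 mulmx1 add0r.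
have : sign_or_zero (\det (A0 *m block_mx X1 0 X2 1%:M)).
  by rewrite A0X; exact/det_incidence/incidence_mx_rowsub/incidence_mx_row_mx.
rewrite det_mulmx det_lblock det1 mulr1 => A0X_sign.
by rewrite -[\det X1]mul1r -A0_sqr -mulrA; apply: sign_or_zeroM.
Qed.

End IncidenceMatrices.

(** * Half-edges, cuts and closed walks *)

Section HalfEdges.
Variables (V H : finType) (E : {set {set H}}) (eps : H -> V) (tl : {set H}).
Hypotheses (graphE : is_graph E) (tlE : directed_version E tl).

Definition sgn (h : H) : rat := if h \in tl then 1 else -1.

Definition edge_of (h : H) : {set H} := pblock E h.

Definition cut (S : pred H) (e : {set H}) : rat := \sum_(h in e | S h) sgn h.

Lemma cover_edges : cover E = [set: H].
Proof. by case/andP: graphE => /and3P[/eqP]. Qed.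

Lemma edge_of_mem h : edge_of h \in E.
Proof. by apply: pblock_mem; rewrite cover_edges inE. Qed.

Lemma mem_edge_of h : h \in edge_of h.
Proof. by rewrite mem_pblock cover_edges inE. Qed.

Lemma edge_ofE e h : e \in E -> h \in e -> edge_of h = e.
Proof. by apply: def_pblock; case/andP: graphE => /and3P[]. Qed.

Lemma card_edge e : e \in E -> #|e| = 2%N.
Proof. by case/andP: graphE => _ /forallP/(_ e)/implyP eE /eE/eqP. Qed.

Lemma edge_tail_head e : e \in E ->
  exists h h', [/\ e = [set h; h'], h != h', h \in tl & h' \notin tl].
Proof.
move=> eE; have /eqP/cards1P[h eItl] := tlE eE.
have /eqP/cards2P[a [b [ab e_ab]]] := card_edge eE.
have /setIP[he htl] : h \in e :&: tl by rewrite eItl set11.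
have head x : x \in e -> x != h -> x \notin tl.
  by move=> xe; apply: contra => xtl; rewrite -in_set1 -eItl inE xe.
rewrite e_ab in he head *; case/set2P: he htl head => -> htl head.
  by exists a, b; split=> //; apply: head; rewrite ?inE ?eqxx ?orbT // eq_sym.
by exists b, a; rewrite setUC eq_sym; split=> //; apply: head; rewrite ?inE ?eqxx.
Qed.

Lemma sum_sgn_edge e : e \in E -> \sum_(h in e) sgn h = 0.
Proof.
case/edge_tail_head=> h [h' [-> hh' htl h'tl]].
by rewrite big_setU1 ?inE //= big_set1 /sgn htl (negbTE h'tl) subrr.
Qed.

Lemma cut_edge e : e \in E ->
  exists h h', forall S, cut S e = (S h)%:R - (S h')%:R.
Proof.
case/edge_tail_head=> h [h' [-> hh' htl h'tl]]; exists h, h' => S.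
rewrite /cut big_mkcondr big_setU1 ?inE //= big_set1 /sgn htl (negbTE h'tl).
by case: (S h); case: (S h'); rewrite ?addr0 ?add0r ?sub0r ?subr0.
Qed.

Lemma sum_sgn_subset e (A : {set H}) : e \in E -> A \subset e ->
  \sum_(h in A) sgn h = if [pick h | A == [set h]] is Some h then sgn h else 0.
Proof.
move=> eE Ae; case: pickP => [h /eqP-> | not1]; first by rewrite big_set1.
have : (#|A| <= 2)%N by rewrite -(card_edge eE) subset_leq_card.
rewrite leq_eqVlt ltnS leq_eqVlt ltnS leqn0 cards_eq0.
case/or3P=> [A2 | /cards1P[h Ah] | /eqP->]; last by rewrite big_set0.
  have /eqP-> : A == e by rewrite eqEcard Ae (eqP A2) card_edge.
  exact: sum_sgn_edge.
by have := not1 h; rewrite Ah eqxx.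
Qed.

Lemma Delta_cut o e t : e \in E -> Delta tl o e t = cut (mem (o t)) e.
Proof.
move=> eE; rewrite /cut (eq_bigl (fun h => h \in e :&: o t)) => [|h]; last by rewrite in_setI.
by rewrite (sum_sgn_subset eE (subsetIl e (o t))) /Delta; case: pickP.
Qed.

Lemma big_edges (S : pred H) (F : H -> {set H} -> rat) :
  \sum_(e in E) \sum_(h in e | S h) F h e = \sum_(h | S h) F h (edge_of h).
Proof.
rewrite (exchange_big_dep S) /=; last by move=> e h _ /andP[].
apply: eq_bigr => h Sh; rewrite (big_pred1 (edge_of h)) // => e.
rewrite Sh andbT; apply/andP/eqP => [[eE he]|->]; first by rewrite (edge_ofE eE he).
by rewrite edge_of_mem mem_edge_of.
Qed.

Definition partner (h : H) : H := odflt h [pick h' in edge_of h | h' != h].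

Lemma edge_of_partner_spec h : edge_of h = [set h; partner h] /\ partner h != h.
Proof.
have /eqP/cards2P[a [b [ab e_ab]]] := card_edge (edge_of_mem h).
have [h' [e_hh' h'h]] : exists h', edge_of h = [set h; h'] /\ h' != h.
  have : h \in edge_of h := mem_edge_of h.
  rewrite e_ab; case/set2P=> ->; first by exists b; rewrite eq_sym.
  by exists a; rewrite setUC.
rewrite /partner; case: pickP => /= [x /andP[] | /(_ h')]; rewrite e_hh' !inE.
  by case/orP=> /eqP-> xh; [rewrite eqxx in xh | split].
by rewrite eqxx orbT h'h.
Qed.

Lemma edge_of_partner h : edge_of h = [set h; partner h].
Proof. by case: (edge_of_partner_spec h). Qed.

Lemma partner_neq h : partner h != h.
Proof. by case: (edge_of_partner_spec h). Qed.

Lemma partner_of_edge a b : [set a; b] \in E -> partner a = b.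
Proof.
move=> abE; have : partner a \in [set a; b].
  by rewrite -(edge_ofE abE (set21 a b)) edge_of_partner !inE eqxx orbT.
by case/set2P=> // pa; have := partner_neq a; rewrite pa eqxx.
Qed.

Lemma partnerK : involutive partner.
Proof. by move=> h; apply: partner_of_edge; rewrite setUC -edge_of_partner edge_of_mem. Qed.

Lemma edge_of_partnerK h : edge_of (partner h) = edge_of h.
Proof. by apply: edge_ofE; rewrite ?edge_of_mem // edge_of_partner !inE eqxx orbT. Qed.

Lemma sgn_partner h : sgn (partner h) = - sgn h.
Proof.
apply/eqP; rewrite -addr_eq0 addrC -(sum_sgn_edge (edge_of_mem h)) edge_of_partner.
by rewrite big_setU1 ?big_set1 // inE eq_sym partner_neq.
Qed.

Lemma sgn_sqr h : sgn h * sgn h = 1.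
Proof. by rewrite /sgn; case: ifP; rewrite ?mulrNN mulr1. Qed.

Lemma sgn_neq0 h : sgn h != 0.
Proof. by rewrite /sgn; case: ifP; rewrite ?oppr_eq0 oner_eq0. Qed.


Section ClosedWalk.
Variable W : seq (H * H).
Hypothesis W_closed : closed_walk E eps W.

Definition exits (h : H) : rat := \sum_(q <- W) (q.2 == h)%:R.
Definition entries (h : H) : rat := \sum_(q <- W) (q.1 == h)%:R.
Definition net_exits (S : pred H) : rat := \sum_(q <- W) ((S q.2)%:R - (S q.1)%:R).

(* A walk leaving through [h] enters the next vertex through [partner h]. *)
Lemma entries_partner h : entries h = exits (partner h).
Proof.
case/andP: W_closed => _ W_cycle; apply: big_cycle W_cycle _ => p q /partner_of_edge <-.
by rewrite (can2_eq partnerK partnerK).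
Qed.

Lemma sigmaE e :
  (sigma tl W e)%:~R = \sum_(q <- W) (if q.2 \in e then sgn q.2 else 0) :> rat.
Proof.
rewrite /sigma (big_morph (fun n : int => n%:~R : rat) (@intrD _) (mulr0z 1)).
by apply: eq_bigr => q _; rewrite /sgn; case: (q.2 \in e); case: (q.2 \in tl).
Qed.

Lemma sgn_sigma h : sgn h * (sigma tl W (edge_of h))%:~R = exits h - entries h.
Proof.
rewrite sigmaE mulr_sumr entries_partner -sumrB; apply: eq_bigr => q _.
rewrite edge_of_partner !inE; case: (eqVneq q.2 h) => [->|qh] /=.
  by rewrite sgn_sqr eq_sym (negbTE (partner_neq h)) subr0.
case: (eqVneq q.2 (partner h)) => [->|qp] /=; last by rewrite mulr0 subrr.
by rewrite sgn_partner mulrN sgn_sqr sub0r.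
Qed.

Lemma sum_exits_entries (S : pred H) :
  \sum_(h | S h) (exits h - entries h) = net_exits S.
Proof.
under eq_bigr do rewrite -sumrB.
by rewrite exchange_big /=; apply: eq_bigr => q _; rewrite sumrB !sum_delta.
Qed.

Lemma flow_through_cut (S : pred H) :
  \sum_(e in E) cut S e * (sigma tl W e)%:~R = net_exits S.
Proof.
under eq_bigr do rewrite mulr_suml.
rewrite (big_edges S (fun h e => sgn h * (sigma tl W e)%:~R)).
by under eq_bigr do rewrite sgn_sigma; apply: sum_exits_entries.
Qed.

Lemma eq_net_exits (S S' : pred H) : S =1 S' -> net_exits S = net_exits S'.
Proof. by move=> eqS; apply: eq_bigr => q _; rewrite !eqS. Qed.

Lemma net_exits_split (S P : pred H) :
  net_exits S = net_exits (fun h => S h && P h) + net_exits (fun h => S h && ~~ P h).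
Proof. by rewrite -!sum_exits_entries (bigID P). Qed.

Lemma net_exits_vertex v : net_exits (fun h => eps h == v) = 0.
Proof.
rewrite /net_exits big_seq big1 // => q qW.
by case/andP: W_closed => /allP/(_ q qW)/andP[_ /eqP->] _; rewrite subrr.
Qed.

End ClosedWalk.

Lemma CM_Delta_net_exits B o e0 t : closed_walk E eps (B e0) ->
  CM_Delta E tl B o e0 t = net_exits (B e0) (mem (o t)).
Proof.
move=> B_closed; rewrite -(flow_through_cut B_closed); apply: eq_bigr => e eE.
by rewrite mulrC (Delta_cut _ _ eE).
Qed.

Lemma sigma_circuit W q : oriented_circuit E eps W -> q \in W ->
  (sigma tl W (edge_of q.2))%:~R = sgn q.2.
Proof.
case/andP=> /andP[_ W_closed]; rewrite uniq_flatten_pairs cat_uniq.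
case/and3P=> fst_uniq /hasPn snd_fst snd_uniq qW.
have exits1 : exits W q.2 = 1.
  by rewrite /exits sumr_count -(count_map snd (pred1 q.2)) count_uniq_mem ?map_f.
have entries0 : entries W q.2 = 0.
  rewrite /entries sumr_count -(count_map fst (pred1 q.2)) count_uniq_mem //.
  by rewrite (negbTE (snd_fst _ (map_f _ qW))).
have := congr1 (fun x => sgn q.2 * x) (sgn_sigma W_closed q.2).
by rewrite /= exits1 entries0 subr0 mulrA sgn_sqr mul1r mulr1.
Qed.

Lemma sigma_not_used W e : ~~ uses W e -> sigma tl W e = 0.
Proof.
move=> not_used; rewrite /sigma big_seq big1 // => q qW.
by case: ifP => // qe; case/hasP: not_used; exists q.
Qed.

(** * Circulations on a forest *)

Section ForestFlows.
Variables (T : {set {set H}}) (z : {set H} -> rat).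

Let flow h := sgn h * z (edge_of h).

Hypotheses (T_forest : forest E eps T) (z_T : forall e, z e != 0 -> e \in T)
  (z_conserved : forall v, \sum_(h | eps h == v) flow h = 0).

Lemma flow_partner h : flow (partner h) = - flow h.
Proof. by rewrite /flow edge_of_partnerK sgn_partner mulNr. Qed.

Lemma exists_outflow h :
  0 < flow h -> exists h', (eps h' == eps (partner h)) && (0 < flow h').
Proof.
move=> pos_h; apply/existsP; apply: contraT; rewrite negb_exists => /forallP no_out.
suff : \sum_(h' | eps h' == eps (partner h)) flow h' < 0 by rewrite z_conserved ltxx.
rewrite (bigD1 (partner h)) //= -[0]addr0 ltr_leD ?flow_partner ?oppr_lt0 //.
by apply: sumr_le0 => h' /andP[at_h' _]; move: (no_out h'); rewrite at_h' /= -leNgt.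
Qed.

Let next h := odflt h [pick h' | (eps h' == eps (partner h)) && (0 < flow h')].

Lemma next_spec h : 0 < flow h -> 0 < flow (next h) /\ eps (next h) = eps (partner h).
Proof.
move=> pos_h; rewrite /next; case: pickP => [h' /andP[/eqP-> ->] | none] //=.
by have [h' ] := exists_outflow pos_h; rewrite none.
Qed.

Lemma circuit_of_flow_orbit y :
  fcycle next (orbit next y) -> {subset orbit next y <= [pred h | 0 < flow h]} ->
  oriented_circuit E eps [seq (partner x, next x) | x <- orbit next y].
Proof.
set c := orbit next y => c_cycle c_pos.
have pos x : x \in c -> 0 < flow x by move/c_pos.
have partner_next x x' : x \in c -> x' \in c -> partner x != next x'.
  move=> xc x'c; apply/eqP => eq_x; have := pos _ (mem_orbit x'c).
  by rewrite -eq_x flow_partner oppr_gt0 ltNge ltW ?pos.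
have c_closed : closed_walk E eps [seq (partner x, next x) | x <- c].
  apply/andP; split.
    apply/allP => _ /mapP[x xc ->]; rewrite /dsingle_transition /= partner_next //=.
    by rewrite (next_spec (pos x xc)).2 eqxx.
  rewrite cycle_map; apply: sub_cycle c_cycle => x _ /eqP <- /=.
  by rewrite -edge_of_partner edge_of_mem.
rewrite /oriented_circuit c_closed andbT; apply/andP; split.
  by rewrite -size_eq0 size_map size_orbit -lt0n order_gt0.
rewrite -map_comp (uniq_flatten_pairs partner next) cat_uniq.
rewrite (map_inj_uniq (can_inj partnerK)) orbit_uniq /=.
rewrite (map_inj_in_uniq (iffLR (orbitPcycle 0 5) c_cycle)) orbit_uniq andbT.
apply/hasPn => _ /mapP[x' x'c ->]; apply/mapP => -[x xc /esym/eqP].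
by rewrite (negbTE (partner_next x x' xc x'c)).
Qed.

(* Positive flow can always be continued, so following it closes a circuit
   inside the support of [z], that is, inside the forest. *)
Lemma forest_flow0 e : z e = 0.
Proof.
apply/eqP/negP => /negP ze0; have eT := z_T ze0.
have eE : e \in E by apply: (subsetP (proj1 T_forest)).
have [h pos_h] : exists h, 0 < flow h.
  have /card_gt0P[h he] : (0 < #|e|)%N by rewrite card_edge.
  have : flow h != 0 by rewrite /flow (edge_ofE eE he) mulf_neq0 ?sgn_neq0.
  rewrite neq_lt => /orP[neg | pos]; last by exists h.
  by exists (partner h); rewrite flow_partner oppr_gt0.
have next_pos : {homo next : x / x \in [pred x | 0 < flow x]}.
  by move=> x /(next_spec) [].
have [y [y_cycle y_pos]] := exists_fcycle_orbit next_pos pos_h.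
have [e' e'E /andP[]] := proj2 T_forest _ (circuit_of_flow_orbit y_cycle y_pos).
case/hasP=> _ /mapP[x xc ->] /= x_e'; apply: negP; rewrite negbK z_T //.
rewrite -(edge_ofE e'E x_e'); apply: contraTneq (next_spec (y_pos x xc)).1.
by rewrite /flow => ->; rewrite mulr0 ltxx.
Qed.

End ForestFlows.

End HalfEdges.

(** * The split graph *)

Section SplitGraph.
Variables (V H : finType) (E : {set {set H}}) (eps : H -> V) (tl : {set H})
  (T : {set {set H}}) (B : {set H} -> seq (H * H)) (o : {set {set H}} -> {set H}).
Hypotheses (graphE : is_graph E) (tlE : directed_version E tl)
  (T_forest : forest E eps T) (B_fund : strictly_fundamental_basis E eps T B).
Variables (k : nat) (f : 'I_k -> {set H}) (g : 'I_k -> {set {set H}}) (vtx : 'I_k -> V).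
Hypotheses (f_cotree : forall i, f i \in E :\: T) (vtx_inj : injective vtx)
  (o_at : forall j h, h \in o (g j) -> eps h = vtx j).

(* The vertex [vtx j] is split into [(vtx j, true)], which receives the
   half-edges of [o (g j)], and [(vtx j, false)], which receives the others and
   is joined to it by the new arc [link j]; any other vertex [v] becomes
   [(v, false)]. *)
Definition chosen (h : H) : bool := [exists j, h \in o (g j)].

Definition chosen_at (v : V) (h : H) : bool := (eps h == v) && chosen h.

Definition side (h : H) : V * bool := (eps h, chosen h).

Definition split_edge (e : {set H}) (q : V * bool) : rat :=
  cut tl (fun h => side h == q) e.

Definition link (j : 'I_k) (q : V * bool) : rat :=
  ((vtx j, false) == q)%:R - ((vtx j, true) == q)%:R.

Lemma chosen_atE j h : chosen_at (vtx j) h = (h \in o (g j)).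
Proof.
apply/andP/idP => [[/eqP h_at /existsP[j' hj']] | hj]; last first.
  by rewrite (o_at hj) eqxx; split=> //; apply/existsP; exists j.
by rewrite -[j](vtx_inj (etrans (esym (o_at hj')) h_at)).
Qed.

Lemma chosen_at_free v : (forall j, vtx j != v) -> chosen_at v =1 xpred0.
Proof.
move=> free h; apply/negbTE/andP => -[/eqP h_at /existsP[j hj]].
by have := free j; rewrite -h_at (o_at hj) eqxx.
Qed.

Lemma sum_link j0 c (x : 'I_k -> rat) :
  \sum_j link j (vtx j0, c) * x j = (if c then -1 else 1) * x j0.
Proof.
rewrite (bigD1 j0) //= big1 ?addr0 => [|j jj0]; last first.
  by rewrite /link !xpair_eqE (inj_eq vtx_inj) (negbTE jj0) subrr mul0r.
by rewrite /link !xpair_eqE eqxx; case: c; rewrite /= ?subr0 ?sub0r.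
Qed.

Lemma sum_link_free v c (x : 'I_k -> rat) :
  (forall j, vtx j != v) -> \sum_j link j (v, c) * x j = 0.
Proof.
move=> free; rewrite big1 // => j _.
by rewrite /link !xpair_eqE (negbTE (free j)) subrr mul0r.
Qed.

Lemma sum_link_net_exits W v (c : bool) :
  \sum_j link j (v, c) * net_exits W (mem (o (g j))) =
  (if c then -1 else 1) * net_exits W (chosen_at v).
Proof.
case: (pickP (fun j => vtx j == v)) => [j0 /eqP <- | free].
  by rewrite sum_link (eq_net_exits _ (chosen_atE j0)).
have {}free j : vtx j != v by rewrite free.
rewrite sum_link_free // (eq_net_exits _ (chosen_at_free free)).
by rewrite -sum_exits_entries big_pred0 ?mulr0.
Qed.

Lemma net_exits_side W v (c : bool) : closed_walk E eps W ->
  net_exits W (fun h => side h == (v, c)) =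
  (if c then 1 else -1) * net_exits W (chosen_at v).
Proof.
move=> W_closed; case: c.
  by rewrite mul1r; apply: eq_net_exits => h; rewrite /side xpair_eqE eqb_id.
have := net_exits_split W (fun h => eps h == v) chosen.
rewrite (net_exits_vertex W_closed) => /esym/eqP; rewrite addrC addr_eq0 mulN1r => /eqP <-.
by apply: eq_net_exits => h; rewrite /side xpair_eqE eqbF_neg.
Qed.

Lemma split_circulation W q : closed_walk E eps W ->
  \sum_j link j q * net_exits W (mem (o (g j))) +
  \sum_(e in E) split_edge e q * (sigma tl W e)%:~R = 0.
Proof.
case: q => v c W_closed.
rewrite (flow_through_cut graphE tlE W_closed (fun h => side h == (v, c))).
rewrite sum_link_net_exits net_exits_side //.
by case: c; rewrite ?mulN1r ?mul1r ?addNr ?addrN.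
Qed.

Lemma link_pair j v : link j (v, true) + link j (v, false) = 0.
Proof. by rewrite /link !xpair_eqE /= !andbT !andbF subr0 sub0r addNr. Qed.

Lemma split_edge_pair e v :
  split_edge e (v, true) + split_edge e (v, false) = cut tl (fun h => eps h == v) e.
Proof.
rewrite /cut [RHS](bigID chosen) /=.
by congr (_ + _); apply: eq_bigl => h; rewrite /side xpair_eqE ?eqb_id ?eqbF_neg andbA.
Qed.

Lemma split_kernel0 (x : 'I_k -> rat) (y : {set H} -> rat) :
  (forall e, y e != 0 -> e \in T) ->
  (forall q, \sum_j link j q * x j + \sum_(e in T) split_edge e q * y e = 0) ->
  (forall e, y e = 0) /\ (forall j, x j = 0).
Proof.
move=> y_T split0.
have y0 : forall e, y e = 0.
  apply: (forest_flow0 graphE tlE T_forest y_T) => v.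
  have := congr2 +%R (split0 (v, true)) (split0 (v, false)).
  rewrite addr0 addrACA -!big_split /= big1 ?add0r => [|j _]; last first.
    by rewrite -mulrDl link_pair mul0r.
  under eq_bigr do rewrite -mulrDl split_edge_pair.
  move=> sumT0; apply: etrans _ sumT0.
  rewrite -(big_edges graphE _ (fun h e => sgn tl h * y e)).
  rewrite (big_setID T) /= (setIidPr (proj1 T_forest)) [X in _ + X]big1 ?addr0.
    by apply: eq_bigr => e _; rewrite mulr_suml.
  move=> e /setDP[_ eT]; rewrite big1 // => h _.
  by rewrite (_ : y e = 0) ?mulr0 //; apply/eqP; apply: contraNT eT => /y_T.
split=> // j; have := split0 (vtx j, true).
rewrite sum_link big1 => [|e _]; last by rewrite y0 mulr0.
by rewrite addr0 mulN1r => /eqP; rewrite oppr_eq0 => /eqP.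
Qed.

Lemma sum_fundamental (F : {set H} -> rat) e0 : e0 \in E :\: T ->
  \sum_(e in E) F e * (sigma tl (B e0) e)%:~R =
  F e0 * (sigma tl (B e0) e0)%:~R + \sum_(e in T) F e * (sigma tl (B e0) e)%:~R.
Proof.
move=> e0_cotree; have [_ _ B_in] := B_fund e0_cotree; case/setDP: e0_cotree => e0E e0T.
rewrite (bigD1 e0) //=; congr (_ + _).
rewrite (bigID (mem T)) /= [X in _ + X]big1 ?addr0 => [|e /andP[/andP[eE ee0] eT]].
  apply: eq_bigl => e; case eT: (e \in T); rewrite ?andbF ?andbT //=.
  by rewrite (subsetP (proj1 T_forest) _ eT); apply: contraTneq eT => ->.
rewrite sigma_not_used ?mulr0z ?mulr0 //; apply/negP => /(B_in _ eE).
by rewrite (negbTE eT) (negbTE ee0).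
Qed.

Lemma fundamental_closed e0 : e0 \in E :\: T -> closed_walk E eps (B e0).
Proof. by case/B_fund => /andP[/andP[]]. Qed.

Lemma sigma_fundamental e0 : e0 \in E :\: T ->
  exists h, (sigma tl (B e0) e0)%:~R = sgn tl h.
Proof.
move=> e0_cotree; have [B_circ /hasP[q qB qe0] _] := B_fund e0_cotree.
exists q.2; have := sigma_circuit graphE tlE B_circ qB.
by rewrite (edge_ofE graphE (setDP e0_cotree).1 qe0).
Qed.

Lemma split_edge_incidence e : e \in E -> incidence_col (split_edge e).
Proof.
case/(cut_edge graphE tlE)=> h [h' cutE].
apply: eq_incidence_col (incidence_col_delta (side h) (side h')) => q.
by rewrite /split_edge cutE.
Qed.

Definition link_mx : 'M[rat]_(#|{: V * bool}|, k) :=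
  \matrix_(i, j) link j (enum_val i).

Definition tree_mx : 'M[rat]_(#|{: V * bool}|, #|T|) :=
  \matrix_(i, l) split_edge (enum_val l) (enum_val i).

Definition cotree_mx : 'M[rat]_(#|{: V * bool}|, k) :=
  \matrix_(i, j) (- (sigma tl (B (f j)) (f j))%:~R * split_edge (f j) (enum_val i)).

Definition tree_coord_mx : 'M[rat]_(#|T|, k) :=
  \matrix_(l, j) (sigma tl (B (f j)) (enum_val l))%:~R.

Lemma link_mx_incidence : incidence_mx link_mx.
Proof.
move=> j; apply: eq_incidence_col
  (incidence_col_enum_val (incidence_col_delta (vtx j, false) (vtx j, true))) => i.
by rewrite mxE.
Qed.

Lemma tree_mx_incidence : incidence_mx tree_mx.
Proof.
move=> l; have lE := subsetP (proj1 T_forest) _ (enum_valP l).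
apply: eq_incidence_col (incidence_col_enum_val (split_edge_incidence lE)) => i.
by rewrite mxE.
Qed.

Lemma cotree_mx_incidence : incidence_mx cotree_mx.
Proof.
move=> j; have [h] := sigma_fundamental (f_cotree j).
have col := incidence_col_enum_val (A := {: V * bool})
  (split_edge_incidence (setDP (f_cotree j)).1).
rewrite /sgn; case: (h \in tl) => sigma_h.
  by apply: eq_incidence_col (incidence_colN col) => i; rewrite mxE sigma_h mulN1r.
by apply: eq_incidence_col col => i; rewrite mxE sigma_h opprK mul1r.
Qed.

Lemma tree_basis_full : row_full (row_mx link_mx tree_mx).
Proof.
apply: row_full_ker0 => z; rewrite -[z]vsubmxK mul_row_col => z_ker.
pose y e := \sum_(l | enum_val l == e) dsubmx z l 0.
have yE l : y (enum_val l) = dsubmx z l 0.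
  by rewrite /y (big_pred1 l) // => l'; rewrite (inj_eq enum_val_inj).
have [y0 x0] : (forall e, y e = 0) /\ (forall j, usubmx z j 0 = 0).
  apply: split_kernel0 => [e | q].
    rewrite /y; case: (pickP (fun l : 'I_#|T| => enum_val l == e)) => [l /eqP <- _|none].
      exact: enum_valP.
    by rewrite big_pred0 ?eqxx.
  have /matrixP/(_ (enum_rank q) 0) := z_ker; rewrite !mxE => z_ker_q.
  apply: etrans _ z_ker_q; congr (_ + _).
    by apply: eq_bigr => j _; rewrite !mxE enum_rankK.
  rewrite (partition_big (@enum_val _ (mem T)) (mem T)) => [|l _]; last exact: enum_valP.
  apply: eq_bigr => e _; rewrite mulr_sumr; apply: eq_bigr => l /eqP le.
  by rewrite !mxE enum_rankK le.
apply/matrixP => i j0; rewrite (ord1 j0) -[i]splitK [RHS]mxE.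
by case: (split i) => [j | l]; rewrite ?col_mxEu ?col_mxEd ?x0 // -yE y0.
Qed.

Lemma tree_coordinates :
  link_mx *m (\matrix_(i, j) CM_Delta E tl B o (f i) (g j))^T +
  tree_mx *m tree_coord_mx = cotree_mx.
Proof.
apply/matrixP => i j; rewrite !mxE; set q := enum_val i.
have B_closed := fundamental_closed (f_cotree j).
have circ := split_circulation q B_closed.
rewrite (sum_fundamental _ (f_cotree j)) in circ.
rewrite (eq_bigr (fun b => link b q * net_exits (B (f j)) (mem (o (g b))))); last first.
  by move=> b _; rewrite !mxE (CM_Delta_net_exits graphE tlE _ _ B_closed).
pose tree_term e := split_edge e q * (sigma tl (B (f j)) e)%:~R.
rewrite (eq_bigr (fun l => tree_term (enum_val l))) => [|l _]; last by rewrite !mxE.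
rewrite -(big_enum_val tree_term).
apply/eqP; rewrite mulNr -addr_eq0; apply/eqP.
by rewrite -[X in _ = X]circ addrAC -addrA [_ * split_edge _ _]mulrC.
Qed.

Lemma det_CM_Delta_submx :
  sign_or_zero (\det (\matrix_(i, j) CM_Delta E tl B o (f i) (g j))).
Proof.
rewrite -det_tr; apply: det_incidence_coordinates tree_coordinates.
- exact: link_mx_incidence.
- exact: tree_mx_incidence.
- exact: cotree_mx_incidence.
- exact: tree_basis_full.
Qed.

End SplitGraph.

Lemma transversal_at_inj (V H : finType) (eps : H -> V) Tr v t t' :
  Defs.transversal eps Tr -> t \in Tr -> t' \in Tr ->
  transition_at eps v t -> transition_at eps v t' -> t = t'.
Proof.
case=> _ /(_ v)/eqP/cards1P[t0 Tr_v] tTr t'Tr vt vt'.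
have : t \in [set t in Tr | transition_at eps v t] by rewrite inE tTr vt.
have : t' \in [set t in Tr | transition_at eps v t] by rewrite inE t'Tr vt'.
by rewrite Tr_v !inE => /eqP-> /eqP->.
Qed.

Lemma orientation_at (V H : finType) (eps : H -> V) o v t h :
  transitional_orientation eps o -> transition_at eps v t -> h \in o t -> eps h = v.
Proof.
move=> o_orient vt ht; have t_trans : t \in transitions eps.
  by rewrite inE; apply/existsP; exists v.
case/andP: vt => /and3P[/eqP cover_t _ _] _.
have : h \in cover t by apply/bigcupP; exists (o t); rewrite ?o_orient.
by rewrite cover_t inE => /eqP.
Qed.

Theorem mainTheorem13 (V H : finType) (E : {set {set H}}) (eps : H -> V)
  (tl : {set H}) (T : {set {set H}}) (B : {set H} -> seq (H * H))
  (o : {set {set H}} -> {set H}) :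
  is_graph E ->
  four_regular eps ->
  directed_version E tl ->
  maximal_forest E eps T ->
  strictly_fundamental_basis E eps T B ->
  transitional_orientation eps o ->
  totally_transversally_unimodular eps (E :\: T) (CM_Delta E tl B o).
Proof.
move=> graphE _ tlE [T_forest _] B_fund o_orient Tr Tr_transversal k f g _ g_inj
  f_cotree g_Tr.
have /fin_all_exists[vtx vtx_g] : forall j, exists v, transition_at eps v (g j).
  move=> j; have := subsetP (proj1 Tr_transversal) _ (g_Tr j).
  by rewrite inE => /existsP.
have vtx_inj : injective vtx.
  move=> j j' vtx_jj'; apply: g_inj.
  apply: (transversal_at_inj Tr_transversal (g_Tr j) (g_Tr j') (vtx_g j)).
  by rewrite vtx_jj'; exact: vtx_g.
have o_at j h : h \in o (g j) -> eps h = vtx j by apply: orientation_at o_orient (vtx_g j).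
exact: (det_CM_Delta_submx graphE tlE T_forest B_fund f_cotree vtx_inj o_at).
Qed.
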